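(* Let $G\in\mathfrak{Y}_n$ be an infinite finitely generated soluble group, let $F$ be its Fitting subgroup, and suppose the Hirsch length $h(F)$ of $F$ equals $1$. Then $G$ is abelian.
   Context: $\mathfrak{Y}_n$ denotes the class of all groups $G$ (finite or infinite) such that $N_G(A)=A$ for every non-abelian subgroup $A\le G$. The Fitting subgroup is the subgroup generated by all nilpotent normal subgroups; for a finitely generated soluble group in $\mathfrak{Y}_n$ it is polycyclic, and $h(F)$ denotes its Hirsch length (the number of infinite cyclic factors in a polycyclic series). *)

From Stdlib Require Import List Arith.

Record Group := {
  carrier :> Type;
  gmul : carrier -> carrier -> carrier;
  gone : carrier;
  ginv : carrier -> carrier;
  gmulA : forall x y z, gmul x (gmul y z) = gmul (gmul x y) z;
  gmul1l : forall x, gmul gone x = x;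
  gmulVl : forall x, gmul (ginv x) x = gone
}.

Arguments gmul {g}.
Arguments gone {g}.
Arguments ginv {g}.

Section GroupDefs.
Variable G : Group.

Definition subset := G -> Prop.

Definition is_subgroup (H : subset) : Prop :=
  H gone /\ (forall x y, H x -> H y -> H (gmul x y)) /\ (forall x, H x -> H (ginv x)).

Definition gen (S : subset) : subset :=
  fun x => forall H : subset, is_subgroup H -> (forall y, S y -> H y) -> H x.

Definition conj (x g : G) : G := gmul (ginv g) (gmul x g).

Definition comm (x y : G) : G := gmul (gmul (ginv x) (ginv y)) (gmul x y).

Definition commg (A B : subset) : subset :=
  gen (fun z => exists a b, A a /\ B b /\ z = comm a b).

Definition trivial (A : subset) : Prop := forall x, A x -> x = gone.

Definition normalizer (A : subset) : subset :=
  fun g => forall x, A x <-> A (conj x g).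

Definition is_abelian (A : subset) : Prop :=
  forall x y, A x -> A y -> gmul x y = gmul y x.

Definition normal_in (N K : subset) : Prop :=
  is_subgroup N /\ (forall x, N x -> K x) /\
  (forall x g, N x -> K g -> N (conj x g)).

(* lower central series of a subgroup N: gamma_1 = N, gamma_{i+1} = [gamma_i, N] *)
Fixpoint lcs (N : subset) (n : nat) : subset :=
  match n with
  | O => N
  | S k => commg (lcs N k) N
  end.

Definition is_nilpotent (N : subset) : Prop :=
  exists c, trivial (lcs N c).

Fixpoint derived (n : nat) : subset :=
  match n with
  | O => fun _ => True
  | S k => commg (derived k) (derived k)
  end.

Definition soluble : Prop := exists n, trivial (derived n).

Definition fin_generated : Prop :=
  exists l : list G, forall g, gen (fun x => In x l) g.

Definition infinite_group : Prop :=
  forall l : list G, exists g, ~ In g l.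

Definition full_group_abelian : Prop := forall x y : G, gmul x y = gmul y x.

Definition in_Yn : Prop :=
  forall A : subset, is_subgroup A -> ~ is_abelian A ->
    forall g, normalizer A g <-> A g.

Definition fitting : subset :=
  gen (fun x => exists N, normal_in N (fun _ => True) /\ is_nilpotent N /\ N x).

Fixpoint gpow (t : G) (n : nat) : G :=
  match n with O => gone | S k => gmul t (gpow t k) end.

Definition cyclic_quotient (K N : subset) : Prop :=
  exists t, K t /\ forall h, K h ->
    exists n, N (gmul (gpow t n) h) \/ N (gmul (gpow (ginv t) n) h).

(* K / N is infinite: no finite set of elements of K meets every coset of N *)
Definition infinite_quotient (K N : subset) : Prop :=
  forall l : list G, (forall x, In x l -> K x) ->
    exists h, K h /\ forall x, In x l -> ~ N (gmul (ginv x) h).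

(* F has a polycyclic series F = H_0 |> H_1 |> ... |> H_m = 1 with cyclic
   factors, exactly one of which is infinite; i.e. F is polycyclic with
   Hirsch length h(F) = 1 (Hirsch length is an invariant). *)
Definition hirsch_length_one (F : subset) : Prop :=
  exists (H : nat -> subset) (m : nat),
    (forall x, H 0 x <-> F x) /\
    (forall x, H m x <-> x = gone) /\
    (forall i, i < m ->
       is_subgroup (H i) /\ normal_in (H (S i)) (H i) /\
       cyclic_quotient (H i) (H (S i))) /\
    (exists j, j < m /\ infinite_quotient (H j) (H (S j)) /\
       forall i, i < m -> i <> j -> ~ infinite_quotient (H i) (H (S i))).

End GroupDefs.

From Stdlib Require Import ZArith Lia List Permutation Classical.
Open Scope Z_scope.
Local Infix "**" := gmul (at level 40, left associativity).

(* Suppose [G] is not abelian.  In [Y_n] a non-abelian normal subgroup is the whole group,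
   so solubility forces [G'] to be abelian.  From [h(F) = 1], [G] has an element [t] of
   infinite order, and any two commuting elements of [F] satisfy a relation [a^p b^q = 1]
   with [(p, q) <> (0, 0)].  Two consequences of the [Y_n] condition drive the argument:
   no element inverts an element of infinite order, and if [g] normalizes but does not
   centralize an abelian torsion subgroup [M], then [Z(G)] is periodic, since [g] lies in
   every [M<g z^e>] with [z] central, and two choices of [e] give incompatible relations.
   If [G'] is central, [G] has class two, so [G = F]; all commutators are powers of one
   torsion element [c], a power of [t] is central, and a suitable [x^a y^b] together with
   [c] generates an [M] as above.  Otherwise [C = C_G(G')] is abelian and [G = C<g>]; an
   element [u] of infinite order in [C] is dependent on [u^g], which forces [g] to invert
   or to centralize a power [v] of [u]; in the latter case [v] is central and
   [{[c, g] | c in C}] is an [M] as above. *)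

Section GroupLaws.
Context {G : Group}.
Implicit Types x y a : G.

Lemma gmulVr x : x ** ginv x = gone.
Proof.
  rewrite <- (gmul1l _ (x ** ginv x)), <- (gmulVl _ (ginv x)) at 1.
  rewrite <- gmulA, (gmulA _ (ginv x) x (ginv x)), gmulVl, gmul1l. apply gmulVl.
Qed.

Lemma gmul1r x : x ** gone = x.
Proof. rewrite <- (gmulVl _ x), gmulA, gmulVr, gmul1l. reflexivity. Qed.

Lemma gmulKg x y : ginv x ** (x ** y) = y.
Proof. rewrite gmulA, gmulVl, gmul1l. reflexivity. Qed.

Lemma gmulKVg x y : x ** (ginv x ** y) = y.
Proof. rewrite gmulA, gmulVr, gmul1l. reflexivity. Qed.

Lemma gmul_cancel_l a x y : a ** x = a ** y -> x = y.
Proof. intros H. rewrite <- (gmulKg a x), H, gmulKg. reflexivity. Qed.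

Lemma gmul_cancel_r a x y : x ** a = y ** a -> x = y.
Proof.
  intros H. rewrite <- (gmul1r x), <- (gmulVr a), gmulA, H, <- gmulA, gmulVr, gmul1r.
  reflexivity.
Qed.

Lemma ginv_uniq x y : x ** y = gone -> y = ginv x.
Proof. intros H. rewrite <- (gmulKg x y), H, gmul1r. reflexivity. Qed.

Lemma ginvK x : ginv (ginv x) = x.
Proof. symmetry. apply ginv_uniq, gmulVl. Qed.

Lemma ginv_uniq_l x y : x ** y = gone -> x = ginv y.
Proof. intros H. apply ginv_uniq in H. rewrite H, ginvK. reflexivity. Qed.

Lemma ginvM x y : ginv (x ** y) = ginv y ** ginv x.
Proof. symmetry. apply ginv_uniq. rewrite <- !gmulA, (gmulKVg y), gmulVr. reflexivity. Qed.

Lemma ginv1 : ginv (@gone G) = gone.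
Proof. symmetry. apply ginv_uniq, gmul1l. Qed.

Lemma ginv_inj x y : ginv x = ginv y -> x = y.
Proof. intros H. rewrite <- (ginvK x), H, ginvK. reflexivity. Qed.

Lemma gdiv_eq1 x y : ginv x ** y = gone -> x = y.
Proof. intros H. rewrite <- (gmulKVg x y), H, gmul1r. reflexivity. Qed.

End GroupLaws.

Definition zpow {G : Group} (x : G) (k : Z) : G :=
  if 0 <=? k then gpow G x (Z.to_nat k) else gpow G (ginv x) (Z.to_nat (- k)).

Section Powers.
Context {G : Group}.
Implicit Types x y : G.

Lemma gpowSr x n : gpow G x (S n) = gpow G x n ** x.
Proof.
  induction n; simpl. { rewrite gmul1r, gmul1l. reflexivity. }
  simpl in IHn. rewrite <- (gmulA _ x (gpow G x n) x), <- IHn. reflexivity.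
Qed.

Lemma zpow0 x : zpow x 0 = gone.
Proof. reflexivity. Qed.

Lemma zpow1 x : zpow x 1 = x.
Proof. apply gmul1r. Qed.

Lemma zpowN1 x : zpow x (-1) = ginv x.
Proof. apply gmul1r. Qed.

Lemma zpow_succ x k : zpow x (Z.succ k) = zpow x k ** x.
Proof.
  unfold zpow. destruct (Z.leb_spec 0 k) as [Hk|Hk].
  - destruct (Z.leb_spec 0 (Z.succ k)); [|lia].
    replace (Z.to_nat (Z.succ k)) with (S (Z.to_nat k)) by lia. apply gpowSr.
  - destruct (Z.leb_spec 0 (Z.succ k)).
    + replace k with (-1) by lia. simpl. rewrite gmul1r, gmulVl. reflexivity.
    + replace (Z.to_nat (- k)) with (S (Z.to_nat (- Z.succ k))) by lia.
      rewrite gpowSr, <- gmulA, gmulVl, gmul1r. reflexivity.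
Qed.

Lemma zpow_pred x k : zpow x (Z.pred k) = zpow x k ** ginv x.
Proof.
  rewrite <- (Z.succ_pred k) at 2. rewrite zpow_succ, <- gmulA, gmulVr, gmul1r. reflexivity.
Qed.

Lemma zpow_add x a b : zpow x (a + b) = zpow x a ** zpow x b.
Proof.
  revert a. induction b using Z.peano_ind; intros a.
  - rewrite Z.add_0_r, zpow0, gmul1r. reflexivity.
  - rewrite Z.add_succ_r, !zpow_succ, IHb, gmulA. reflexivity.
  - rewrite Z.add_pred_r, !zpow_pred, IHb, gmulA. reflexivity.
Qed.

Lemma zpow_opp x a : zpow x (- a) = ginv (zpow x a).
Proof. apply ginv_uniq. rewrite <- zpow_add, Z.add_opp_diag_r. reflexivity. Qed.

Lemma zpow_mul x a b : zpow x (a * b) = zpow (zpow x a) b.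
Proof.
  induction b using Z.peano_ind.
  - rewrite Z.mul_0_r. reflexivity.
  - rewrite Z.mul_succ_r, zpow_add, zpow_succ, IHb; reflexivity.
  - rewrite Z.mul_pred_r, zpow_pred, <- IHb. unfold Z.sub. rewrite zpow_add, zpow_opp. reflexivity.
Qed.

Lemma zpow_ginv x k : zpow (ginv x) k = zpow x (- k).
Proof. rewrite <- zpowN1, <- zpow_mul. reflexivity. Qed.

Lemma zpow1g k : zpow (@gone G) k = gone.
Proof.
  induction k using Z.peano_ind; [reflexivity| |].
  - rewrite zpow_succ, IHk, gmul1l. reflexivity.
  - rewrite zpow_pred, IHk, ginv1, gmul1l. reflexivity.
Qed.

Lemma gpow_zpow x n : gpow G x n = zpow x (Z.of_nat n).
Proof.
  unfold zpow. destruct (Z.leb_spec 0 (Z.of_nat n)); [|lia]. rewrite Nat2Z.id. reflexivity.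
Qed.

Lemma zpow_sub_eq1 x a b : zpow x a = zpow x b -> zpow x (a - b) = gone.
Proof. intros H. unfold Z.sub. rewrite zpow_add, H, zpow_opp, gmulVr. reflexivity. Qed.

Lemma zpow_abs_eq1 x r : zpow x r = gone -> zpow x (Z.abs r) = gone.
Proof.
  intros H. destruct (Z.abs_spec r) as [[_ ->]|[_ ->]]; auto.
  rewrite zpow_opp, H, ginv1. reflexivity.
Qed.

End Powers.

Definition commute {G : Group} (x y : G) := x ** y = y ** x.

Definition central {G : Group} (a : G) := forall w : G, commute a w.

Definition torsion {G : Group} (x : G) := exists r, r <> 0 /\ zpow x r = gone.

Definition inford {G : Group} (x : G) := forall r, r <> 0 -> zpow x r <> gone.

Section Commutation.
Context {G : Group}.
Implicit Types x y z g : G.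

Lemma commute_refl x : commute x x.
Proof. reflexivity. Qed.

Lemma commute_sym x y : commute x y -> commute y x.
Proof. unfold commute; auto. Qed.

Lemma commute1 x : commute x gone.
Proof. unfold commute. rewrite gmul1l, gmul1r. reflexivity. Qed.

Lemma commuteV x y : commute x y -> commute x (ginv y).
Proof.
  unfold commute; intros H. apply (gmul_cancel_l y).
  rewrite gmulA, <- H, <- gmulA, gmulVr, gmulKVg, gmul1r. reflexivity.
Qed.

Lemma commuteM x y z : commute x y -> commute x z -> commute x (y ** z).
Proof. unfold commute; intros H1 H2. rewrite gmulA, H1, <- gmulA, H2, gmulA. reflexivity. Qed.

Lemma commuteX x y k : commute x y -> commute x (zpow y k).
Proof.
  intros H. induction k using Z.peano_ind.
  - apply commute1.
  - rewrite zpow_succ. apply commuteM; auto.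
  - rewrite zpow_pred. apply commuteM, commuteV; auto.
Qed.

Lemma commuteXX x y (a b : Z) : commute x y -> commute (zpow x a) (zpow y b).
Proof. intros H. apply commuteX, commute_sym, commuteX, commute_sym, H. Qed.

Lemma commute_zpow x (a : Z) : commute x (zpow x a).
Proof. apply commuteX, commute_refl. Qed.

Lemma zpow_comm_self x (a b : Z) : commute (zpow x a) (zpow x b).
Proof. apply commuteXX, commute_refl. Qed.

Lemma zpowMn x y k : commute x y -> zpow (x ** y) k = zpow x k ** zpow y k.
Proof.
  intros H. induction k using Z.peano_ind.
  - rewrite !zpow0, gmul1l. reflexivity.
  - rewrite !zpow_succ, IHk, <- !gmulA. f_equal.
    rewrite !gmulA. f_equal. apply commute_sym, commuteX, H.
  - rewrite !zpow_pred, IHk, ginvM, <- !gmulA. f_equal. rewrite gmulA.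
    apply commute_sym, commuteM.
    + apply commuteX, commute_sym, commuteV, commute_sym, H.
    + apply commuteV, commute_sym, commuteV, commute_sym, H.
Qed.

Lemma zpow_pair (a b : G) (x y r : Z) :
  commute a b -> zpow (zpow a x ** zpow b y) r = zpow a (x * r) ** zpow b (y * r).
Proof. intros H. rewrite zpowMn, !zpow_mul; auto. apply commuteXX, H. Qed.

Lemma central_zpow z e : central z -> central (zpow z e).
Proof. intros Hz w. apply commute_sym, commuteX, commute_sym, Hz. Qed.

Lemma inford_zpow x (a : Z) : inford x -> a <> 0 -> inford (zpow x a).
Proof. intros Hx Ha r Hr. rewrite <- zpow_mul. apply Hx. lia. Qed.

Lemma inford_zpow_inj x (a b : Z) : inford x -> zpow x a = zpow x b -> a = b.
Proof.
  intros Hx H. apply zpow_sub_eq1 in H. destruct (Z.eq_dec a b); auto.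
  exfalso. apply (Hx (a - b)); auto. lia.
Qed.

Lemma conjE x g : conj G x g = ginv g ** (x ** g).
Proof. reflexivity. Qed.

Lemma commE x y : comm G x y = ginv x ** ginv y ** (x ** y).
Proof. reflexivity. Qed.

Lemma conjMg x y g : conj G (x ** y) g = conj G x g ** conj G y g.
Proof. rewrite !conjE, <- !gmulA, gmulKVg. reflexivity. Qed.

Lemma conj1g g : conj G gone g = gone.
Proof. rewrite conjE, gmul1l, gmulVl. reflexivity. Qed.

Lemma conjVg x g : conj G (ginv x) g = ginv (conj G x g).
Proof. apply ginv_uniq. rewrite <- conjMg, gmulVr, conj1g. reflexivity. Qed.

Lemma conjXg x g k : conj G (zpow x k) g = zpow (conj G x g) k.
Proof.
  induction k using Z.peano_ind.
  - apply conj1g.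
  - rewrite !zpow_succ, conjMg, IHk. reflexivity.
  - rewrite !zpow_pred, conjMg, IHk, conjVg. reflexivity.
Qed.

Lemma conjgM x (a b : G) : conj G (conj G x a) b = conj G x (a ** b).
Proof. rewrite !conjE, ginvM, <- !gmulA. reflexivity. Qed.

Lemma conjg1 x : conj G x gone = x.
Proof. rewrite conjE, ginv1, gmul1l, gmul1r. reflexivity. Qed.

Lemma conjgK x g : conj G (conj G x g) (ginv g) = x.
Proof. rewrite conjgM, gmulVr, conjg1. reflexivity. Qed.

Lemma conjgKV x g : conj G (conj G x (ginv g)) g = x.
Proof. rewrite conjgM, gmulVl, conjg1. reflexivity. Qed.

Lemma conj_eq1 x g : conj G x g = gone -> x = gone.
Proof. intros H. rewrite <- (conjgK x g), H, conj1g. reflexivity. Qed.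

Lemma conjg_mul_comm x g : conj G x g = x ** comm G x g.
Proof. rewrite conjE, commE, <- !gmulA, gmulKVg. reflexivity. Qed.

Lemma conj_commute x g : commute x g -> conj G x g = x.
Proof. unfold commute. intros H. rewrite conjE, H, gmulKg. reflexivity. Qed.

Lemma commute_conj x g : conj G x g = x -> commute x g.
Proof.
  unfold commute. rewrite conjE. intros H. rewrite <- H at 2. rewrite gmulKVg. reflexivity.
Qed.

Lemma comm_conj (a b g : G) : conj G (comm G a b) g = comm G (conj G a g) (conj G b g).
Proof. rewrite commE, !conjMg, !conjVg. reflexivity. Qed.

Lemma comm_eq1 x y : comm G x y = gone <-> commute x y.
Proof.
  unfold commute. rewrite commE, <- ginvM. split; intros H.
  - apply gdiv_eq1 in H. auto.
  - rewrite H, gmulVl. reflexivity.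
Qed.

Lemma commgg x : comm G x x = gone.
Proof. apply comm_eq1, commute_refl. Qed.

Lemma commVg x y : comm G y x = ginv (comm G x y).
Proof.
  apply ginv_uniq. rewrite !commE, <- !gmulA, (gmulKVg y), (gmulKVg x), (gmulKg y), gmulVl.
  reflexivity.
Qed.

Lemma commMr (a b c : G) : comm G a (b ** c) = comm G a c ** conj G (comm G a b) c.
Proof. rewrite !commE, conjE, !ginvM, <- !gmulA, (gmulKVg c), (gmulKVg a). reflexivity. Qed.

Lemma commMl (a b c : G) : comm G (a ** b) c = conj G (comm G a c) b ** comm G b c.
Proof. rewrite !commE, conjE, !ginvM, <- !gmulA, (gmulKVg b), (gmulKVg c). reflexivity. Qed.

Lemma mulgC_comm (a b : G) : a ** b = b ** a ** comm G a b.
Proof. rewrite commE, <- !gmulA, (gmulKVg a), gmulKVg. reflexivity. Qed.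

Lemma comm1g (a : G) : comm G gone a = gone.
Proof. apply comm_eq1, commute_sym, commute1. Qed.

Lemma commg1 (a : G) : comm G a gone = gone.
Proof. apply comm_eq1, commute1. Qed.

End Commutation.

Section Subgroups.
Context {G : Group}.
Implicit Types (H S : subset G) (x y z g m : G).

Lemma sub1 H : is_subgroup G H -> H gone.
Proof. intros [h _]; auto. Qed.

Lemma subM H x y : is_subgroup G H -> H x -> H y -> H (x ** y).
Proof. intros [_ [h _]]; auto. Qed.

Lemma subV H x : is_subgroup G H -> H x -> H (ginv x).
Proof. intros [_ [_ h]]; auto. Qed.

Lemma subX H x k : is_subgroup G H -> H x -> H (zpow x k).
Proof.
  intros Hs Hx. induction k using Z.peano_ind.
  - rewrite zpow0. apply sub1; auto.
  - rewrite zpow_succ. apply subM; auto.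
  - rewrite zpow_pred. apply subM, subV; auto.
Qed.

Lemma trivial_sub : is_subgroup G (fun x => x = gone).
Proof.
  split; [|split]; auto.
  - intros x y -> ->. apply gmul1l.
  - intros x ->. apply ginv1.
Qed.

Lemma centralizer_sub x : is_subgroup G (fun w => commute x w).
Proof.
  split; [|split].
  - apply commute1.
  - intros. apply commuteM; auto.
  - intros. apply commuteV; auto.
Qed.

Lemma center_sub : is_subgroup G (fun a => central a).
Proof.
  split; [|split].
  - intros w. apply commute_sym, commute1.
  - intros x y Hx Hy w. apply commute_sym, commuteM; apply commute_sym; auto.
  - intros x Hx w. apply commute_sym, commuteV, commute_sym; auto.
Qed.

Lemma gen_sub S : is_subgroup G (gen G S).
Proof.
  split; [|split].
  - intros H Hs _. apply sub1; auto.
  - intros x y Hx Hy H Hs HS. apply subM; [exact Hs | apply Hx | apply Hy]; auto.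
  - intros x Hx H Hs HS. apply subV; [exact Hs | apply Hx]; auto.
Qed.

Lemma gen_in S x : S x -> gen G S x.
Proof. intros Hx H _ HS. auto. Qed.

Lemma gen_min S H : is_subgroup G H -> (forall y, S y -> H y) -> forall x, gen G S x -> H x.
Proof. intros Hs HS x Hx. apply Hx; auto. Qed.

Lemma normalizerP H g :
  (forall x, H x -> H (conj G x g)) -> (forall x, H x -> H (conj G x (ginv g))) ->
  normalizer G H g.
Proof. intros H1 H2 x. split; auto. intros Hx. rewrite <- (conjgK x g). auto. Qed.

Lemma normalizer_sub H : is_subgroup G (normalizer G H).
Proof.
  split; [|split].
  - intros x. rewrite conjg1. reflexivity.
  - intros g h Hg Hh x. rewrite <- conjgM, <- (Hh (conj G x g)). apply Hg.
  - intros g Hg x. rewrite (Hg (conj G x (ginv g))), conjgKV. reflexivity.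
Qed.

Lemma normalizer_conj H g k m : normalizer G H g -> H m -> H (conj G m (zpow g k)).
Proof. intros Hg Hm. exact (proj1 (subX _ g k (normalizer_sub H) Hg m) Hm). Qed.

Lemma normalizer_conj1 H g m : normalizer G H g -> H m -> H (conj G m g).
Proof. intros Hg Hm. exact (proj1 (Hg m) Hm). Qed.

Lemma normalizer_conjV H g m : normalizer G H g -> H m -> H (conj G m (ginv g)).
Proof. intros Hg Hm. exact (proj1 (subV _ g (normalizer_sub H) Hg m) Hm). Qed.

Lemma normalizer_central H z : central z -> normalizer G H z.
Proof. intros Hz x. rewrite conj_commute; [reflexivity | apply commute_sym, Hz]. Qed.

End Subgroups.

(** * Consequences of the [Y_n] condition *)

Section Yn.
Context {G : Group}.
Hypothesis HY : in_Yn G.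
Implicit Types (H N : subset G) (a b g z : G).

Lemma Yn_self_normalizing H a b g : is_subgroup G H -> H a -> H b -> ~ commute a b ->
  normalizer G H g -> H g.
Proof.
  intros Hs Ha Hb Hab Hg. apply (HY H Hs); auto. intros HA. apply Hab, HA; auto.
Qed.

Lemma Yn_normal_nonabelian N g : is_subgroup G N -> (forall x h, N x -> N (conj G x h)) ->
  ~ is_abelian G N -> N g.
Proof. intros Hs Hn Hna. apply (HY N Hs Hna), normalizerP; auto. Qed.

Lemma Yn_central_in H a b z : is_subgroup G H -> H a -> H b -> ~ commute a b ->
  central z -> H z.
Proof.
  intros Hs Ha Hb Hab Hz. apply (Yn_self_normalizing H a b); auto. apply normalizer_central, Hz.
Qed.

End Yn.

Definition mul_cycle {G : Group} (M : subset G) (h : G) : subset G :=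
  fun w => exists m k, M m /\ w = m ** zpow h k.

Section MulCycle.
Context {G : Group} (M : subset G) (h : G).
Hypothesis HM : is_subgroup G M.
Hypothesis HhM : normalizer G M h.

Lemma mul_cycle_in m k : M m -> mul_cycle M h (m ** zpow h k).
Proof. intros Hm. exists m, k. auto. Qed.

Lemma mul_cycle_mulr w c : mul_cycle M h w -> M c -> mul_cycle M h (w ** c).
Proof.
  intros [m [k [Hm ->]]] Hc. exists (m ** conj G c (zpow h (- k))), k. split.
  - apply subM; auto. apply normalizer_conj; auto.
  - rewrite conjE, zpow_opp, ginvK, <- !gmulA, gmulVl, gmul1r. reflexivity.
Qed.

Lemma mul_cycle_sub : is_subgroup G (mul_cycle M h).
Proof.
  split; [|split].
  - exists gone, 0. split; [apply sub1; auto | rewrite zpow0, gmul1l; reflexivity].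
  - intros x y Hx [m' [l [Hm' ->]]]. rewrite gmulA.
    destruct (mul_cycle_mulr x m' Hx Hm') as [m [k [Hm ->]]].
    exists m, (k + l). split; auto. rewrite zpow_add, gmulA. reflexivity.
  - intros x [m [k [Hm ->]]]. exists (conj G (ginv m) (zpow h k)), (- k). split.
    + apply normalizer_conj, subV; auto.
    + rewrite conjE, zpow_opp, ginvM, <- !gmulA, gmulVr, gmul1r. reflexivity.
Qed.

Lemma mul_cycle_zpow m k n : M m ->
  exists m', M m' /\ zpow (m ** zpow h k) n = m' ** zpow h (k * n).
Proof.
  intros Hm. induction n using Z.peano_ind.
  - exists gone. split; [apply sub1; auto | rewrite Z.mul_0_r, !zpow0, gmul1l; reflexivity].
  - destruct IHn as [m' [Hm' E]].
    exists (m' ** conj G m (zpow h (- (k * n)))). split.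
    + apply subM, normalizer_conj; auto.
    + rewrite zpow_succ, E, Z.mul_succ_r, zpow_add, conjE, zpow_opp, ginvK, <- !gmulA, gmulKg.
      reflexivity.
  - destruct IHn as [m' [Hm' E]].
    exists (m' ** conj G (ginv m) (zpow h (- (k * n) + k))). split.
    + apply subM, normalizer_conj, subV; auto.
    + rewrite zpow_pred, E, ginvM, conjE, <- !zpow_opp, <- !gmulA. f_equal.
      rewrite <- (zpow_add h (- (k * n) + k)), Z.mul_pred_r.
      replace (- (k * n) + k + (k * n - k)) with 0 by lia.
      rewrite zpow0, gmul1r, gmulA, <- zpow_add. do 2 f_equal. lia.
Qed.

End MulCycle.

Definition cycle {G : Group} (x : G) : subset G := fun w => exists i, w = zpow x i.

Lemma cycle_sub {G : Group} (x : G) : is_subgroup G (cycle x).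
Proof.
  split; [|split].
  - exists 0. reflexivity.
  - intros y z [i ->] [j ->]. exists (i + j). rewrite zpow_add. reflexivity.
  - intros y [i ->]. exists (- i). rewrite zpow_opp. reflexivity.
Qed.

Lemma cycle_zpow {G : Group} (x : G) i : cycle x (zpow x i).
Proof. exists i. reflexivity. Qed.

Lemma conjg_mul_conjV {G : Group} (x a : G) : conj G x a = x ** (conj G (ginv a) x ** a).
Proof. rewrite !conjE, <- !gmulA, gmulKVg. reflexivity. Qed.

Section NoInversion.
Context {G : Group} (g v : G).
Hypothesis HY : in_Yn G.
Hypothesis Hinv : conj G v g = ginv v.

Let M := cycle (zpow v 2).

Lemma conj_inverting_ginv : conj G v (ginv g) = ginv v.
Proof. apply ginv_inj. rewrite ginvK, <- conjVg, <- Hinv, conjgK. reflexivity. Qed.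

Lemma conj_inverting_zpow a k : a = v \/ a = ginv v ->
  conj G a (zpow g k) = a \/ conj G a (zpow g k) = ginv a.
Proof.
  intros Ha.
  assert (Hv : conj G v (zpow g k) = v \/ conj G v (zpow g k) = ginv v).
  { induction k using Z.peano_ind.
    - left. apply conjg1.
    - rewrite zpow_succ, <- conjgM. destruct IHk as [-> | ->]; [right | left]; auto.
      rewrite conjVg, Hinv, ginvK. reflexivity.
    - rewrite zpow_pred, <- conjgM. destruct IHk as [-> | ->]; [right | left].
      + apply conj_inverting_ginv.
      + rewrite conjVg, conj_inverting_ginv, ginvK. reflexivity. }
  destruct Ha as [-> | ->]; auto.
  rewrite conjVg. destruct Hv as [-> | ->]; rewrite ?ginvK; auto.
Qed.

Lemma inverting_normalizes_even_powers : normalizer G M g.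
Proof.
  apply normalizerP; intros x [i ->]; exists (- i);
    rewrite <- zpow_mul, conjXg, ?Hinv, ?conj_inverting_ginv, zpow_ginv, <- zpow_mul;
    f_equal; lia.
Qed.

(* Conjugating by [v] moves [g^k] only by a factor [v^0] or [v^2]. *)
Lemma inverted_normalizes_mul_cycle : normalizer G (mul_cycle M g) v.
Proof.
  assert (Hconj : forall a x, a = v \/ a = ginv v -> mul_cycle M g x ->
                    mul_cycle M g (conj G x a)).
  { intros a x Ha [m [k [[i ->] ->]]].
    assert (Hma : commute (zpow (zpow v 2) i) a).
    { destruct Ha as [-> | ->]; [|apply commuteV];
        rewrite <- zpow_mul; apply commute_sym, commute_zpow. }
    rewrite conjMg, conj_commute, conjg_mul_conjV, gmulA by exact Hma.
    apply mul_cycle_mulr;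
      [apply cycle_sub | apply inverting_normalizes_even_powers
      | apply mul_cycle_in, cycle_zpow |].
    rewrite conjVg. destruct (conj_inverting_zpow a k Ha) as [-> | ->].
    - rewrite gmulVl. apply (sub1 _ (cycle_sub _)).
    - rewrite ginvK. destruct Ha as [-> | ->]; [exists 1 | exists (-1)];
        rewrite <- zpow_mul; unfold zpow; simpl; rewrite gmul1r; reflexivity. }
  apply normalizerP; intros x Hx; apply Hconj; auto.
Qed.

Lemma Yn_no_inversion : ~ inford v.
Proof.
  intros Hv.
  assert (HvH : mul_cycle M g v).
  { apply (Yn_self_normalizing HY _ (zpow v 2) g).
    - apply mul_cycle_sub; [apply cycle_sub | apply inverting_normalizes_even_powers].
    - exists (zpow v 2), 0. split; [exists 1; symmetry; apply zpow1 | symmetry; apply gmul1r].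
    - exists gone, 1. split; [apply (sub1 _ (cycle_sub _)) | rewrite zpow1, gmul1l; reflexivity].
    - intros Hc. apply (Hv 4); [lia|].
      apply conj_commute in Hc. rewrite conjXg, Hinv, zpow_ginv in Hc.
      replace 4 with (2 - -2) by lia. apply zpow_sub_eq1. symmetry. exact Hc.
    - apply inverted_normalizes_mul_cycle. }
  destruct HvH as [m [k [[i ->] Hvk]]].
  assert (Hgk : zpow g k = zpow v (1 - 2 * i)).
  { apply (gmul_cancel_l (zpow (zpow v 2) i)). rewrite <- Hvk, <- !zpow_mul, <- zpow_add.
    rewrite <- (zpow1 v) at 1. f_equal. lia. }
  assert (Hc : conj G (zpow g k) g = zpow g k) by apply conj_commute, commute_sym, commute_zpow.
  rewrite Hgk, conjXg, Hinv, zpow_ginv in Hc. apply inford_zpow_inj in Hc; auto. lia.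
Qed.

End NoInversion.

(* [|k1| |1 - k2| <= 2 |k1| |k2| < (2 |k1| + 1) |k2| |1 - k1|] *)
Lemma twisted_products_neq (k1 k2 : Z) : k1 <> 1 -> k2 <> 0 ->
  k1 * (1 - k2) <> (2 * Z.abs k1 + 1) * k2 * (1 - k1).
Proof.
  intros H1 H2 H. apply (f_equal Z.abs) in H. rewrite !Z.abs_mul in H.
  rewrite (Z.abs_eq (2 * Z.abs k1 + 1)) in H by lia.
  assert (Hd : Z.abs (1 - k1) >= 1) by lia.
  assert (Hc : Z.abs (1 - k2) <= 2 * Z.abs k2) by lia.
  assert (X1 : 0 <= (2 * Z.abs k1 + 1) * Z.abs k2 * (Z.abs (1 - k1) - 1)) by
    (apply Z.mul_nonneg_nonneg; [apply Z.mul_nonneg_nonneg|]; lia).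
  assert (X2 : Z.abs k1 * Z.abs (1 - k2) <= Z.abs k1 * (2 * Z.abs k2)) by
    (apply Z.mul_le_mono_nonneg_l; lia).
  lia.
Qed.

Section PeriodicCenter.
Context {G : Group} (M : subset G) (g m0 : G).
Hypothesis HY : in_Yn G.
Hypothesis HM : is_subgroup G M.
Hypothesis HMab : is_abelian G M.
Hypothesis HMtor : forall m, M m -> torsion m.
Hypothesis HgM : normalizer G M g.
Hypothesis Hm0 : M m0.
Hypothesis Hgm0 : ~ commute g m0.

(* [g] normalizes the non-abelian group [M<g z^e>], hence lies in it. *)
Lemma power_relation (z : G) e : central z ->
  exists k r, k <> 0 /\ r <> 0 /\ zpow g (r * (1 - k)) = zpow z (r * (e * k)).
Proof.
  intros Hz. pose proof (central_zpow z e Hz) as Hze.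
  set (h := g ** zpow z e).
  assert (HhM : normalizer G M h) by
    (apply (subM _ _ _ (normalizer_sub M)); auto; apply normalizer_central, Hze).
  assert (Hgh : commute g h) by (apply commuteM; [apply commute_refl | apply commute_sym, Hze]).
  assert (Hg : mul_cycle M h g).
  { apply (Yn_self_normalizing HY _ m0 h).
    - apply mul_cycle_sub; auto.
    - exists m0, 0. split; auto. symmetry. apply gmul1r.
    - exists gone, 1. split; [apply sub1; auto | rewrite zpow1, gmul1l; reflexivity].
    - intros Hc. apply Hgm0. apply (gmul_cancel_r (zpow z e)).
      unfold commute in Hc. unfold h in Hc.
      rewrite <- (gmulA _ m0), Hc, <- !gmulA, (Hze m0). reflexivity.
    - apply normalizerP; intros x [m [k [Hm ->]]];
        rewrite conjMg, (conj_commute (zpow h k))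
          by ((apply commuteV + idtac); apply commute_sym, commuteX, Hgh);
        apply mul_cycle_in;
        first [apply (normalizer_conj1 M g) | apply (normalizer_conjV M g)]; auto. }
  destruct Hg as [m [k [Hm Hg]]].
  destruct (Z.eq_dec k 0) as [-> | Hk].
  { exfalso. rewrite zpow0, gmul1r in Hg. subst m. apply Hgm0, HMab; auto. }
  destruct (HMtor m Hm) as [r [Hr Hmr]]. exists k, r. repeat split; auto.
  assert (Hm' : m = zpow g (1 - k) ** zpow z (- (e * k))).
  { apply (gmul_cancel_r (zpow h k)). rewrite <- Hg. unfold h.
    rewrite zpowMn, <- zpow_mul by (apply commute_sym, Hze).
    rewrite <- gmulA, (gmulA _ (zpow z _)), (central_zpow z _ Hz), <- gmulA, <- zpow_add.
    rewrite Z.add_opp_diag_l, zpow0, gmul1r, <- zpow_add, Z.sub_add, zpow1. reflexivity. }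
  rewrite Hm', zpowMn, <- !zpow_mul in Hmr by apply commute_sym, central_zpow, Hz.
  apply ginv_uniq_l in Hmr. rewrite <- zpow_opp in Hmr.
  rewrite Z.mul_comm, Hmr. f_equal. lia.
Qed.

(* Two instances [e = 1] and [e = 2|k1| + 1] of [power_relation] are incompatible. *)
Lemma Yn_center_periodic (z : G) : central z -> ~ inford z.
Proof.
  intros Hz Hzi.
  destruct (power_relation z 1 Hz) as [k1 [r1 [Hk1 [Hr1 E1]]]].
  destruct (power_relation z (2 * Z.abs k1 + 1) Hz) as [k2 [r2 [Hk2 [Hr2 E2]]]].
  assert (Hk11 : k1 <> 1).
  { intros ->. rewrite Z.sub_diag, Z.mul_0_r, zpow0 in E1.
    apply (Hzi (r1 * (1 * 1))); [lia | symmetry; exact E1]. }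
  assert (EE : zpow z (r1 * (1 * k1) * (r2 * (1 - k2)))
               = zpow z (r2 * ((2 * Z.abs k1 + 1) * k2) * (r1 * (1 - k1)))).
  { rewrite (zpow_mul z (r1 * _)), (zpow_mul z (r2 * _)), <- E1, <- E2, <- !zpow_mul.
    f_equal. lia. }
  apply inford_zpow_inj in EE; auto.
  apply (twisted_products_neq k1 k2); auto.
  apply (Z.mul_cancel_l _ _ (r1 * r2)); [lia|]. lia.
Qed.

End PeriodicCenter.

(** * Polycyclic series of Hirsch length one *)

Definition periodic_over {G : Group} (K N : subset G) : Prop :=
  forall y, K y -> exists n, n <> 0 /\ N (zpow y n).

Definition dependent {G : Group} (a b : G) : Prop :=
  exists p q, (p <> 0 \/ q <> 0) /\ zpow a p ** zpow b q = gone.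

Section PeriodicOver.
Context {G : Group}.
Implicit Types K N L : subset G.

Lemma periodic_over_refl K : periodic_over K K.
Proof. intros y Hy. exists 1. rewrite zpow1. split; [lia | auto]. Qed.

Lemma periodic_over_trans K N L : periodic_over K N -> periodic_over N L -> periodic_over K L.
Proof.
  intros HKN HNL y Hy. destruct (HKN y Hy) as [n [Hn HyN]].
  destruct (HNL _ HyN) as [n' [Hn' HyL]]. exists (n * n'). rewrite zpow_mul. split; auto. lia.
Qed.

(* Among [y^0, ..., y^|l|] two fall into the same coset [x N] of a transversal [l]. *)
Lemma finite_quotient_periodic K N : is_subgroup G K -> is_subgroup G N ->
  ~ infinite_quotient G K N -> periodic_over K N.
Proof.
  intros HK HN Hfin y Hy.
  apply not_all_ex_not in Hfin as [l Hl]. apply imply_to_and in Hl as [HlK Hl].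
  assert (Hcov : forall h, K h -> exists x, In x l /\ N (ginv x ** h)).
  { intros h Hh. apply NNPP. intros Hno. apply Hl. exists h. split; auto.
    intros x Hx HNx. apply Hno. exists x. auto. }
  set (R := fun (i : nat) x => N (ginv x ** zpow y (Z.of_nat i))).
  destruct (Permutation_pigeonhole_rel R (l1 := seq 0 (S (length l))) (l2 := l)) as
      [i [i' [l3 [Hperm [x [_ [Hi Hi']]]]]]].
  - apply Forall_forall. intros i _. apply Exists_exists.
    apply Hcov, subX; auto.
  - rewrite length_seq. lia.
  - assert (Hii' : i <> i').
    { intros <-. pose proof (Permutation_NoDup Hperm (seq_NoDup _ _)) as Hnd.
      apply NoDup_cons_iff in Hnd as [Hnin _]. apply Hnin. left. reflexivity. }
    exists (Z.of_nat i' - Z.of_nat i). split; [lia|].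
    pose proof (subM _ _ _ HN (subV _ _ HN Hi) Hi') as HN2.
    unfold R in HN2. rewrite ginvM, ginvK, <- gmulA, gmulKVg, <- zpow_opp, <- zpow_add in HN2.
    rewrite Z.add_comm in HN2. exact HN2.
Qed.

End PeriodicOver.

Definition in_tpow_coset {G : Group} (D : subset G) (t : G) (p : Z) (x : G) : Prop :=
  D (zpow t (- p) ** x).

Section CyclicQuotient.
Context {G : Group} (E D : subset G) (t : G).
Hypothesis HE : is_subgroup G E.
Hypothesis HDE : normal_in G D E.
Hypothesis Ht : E t.
Hypothesis Hcov : forall h, E h -> exists p, in_tpow_coset D t p h.

Let HD : is_subgroup G D := proj1 HDE.

Lemma tpow_coset_mul p q x y :
  in_tpow_coset D t p x -> in_tpow_coset D t q y -> in_tpow_coset D t (p + q) (x ** y).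
Proof.
  unfold in_tpow_coset. intros Hx Hy.
  assert (Hc : D (conj G (zpow t (- p) ** x) (zpow t q))) by
    (apply (proj2 (proj2 HDE)); auto; apply subX; auto).
  pose proof (subM _ _ _ HD Hc Hy) as H.
  rewrite conjE, <- !gmulA, (zpow_opp t q), (gmulKVg (zpow t q)) in H.
  rewrite <- (zpow_opp t q), gmulA, gmulA, <- zpow_add, <- gmulA in H.
  rewrite Z.opp_add_distr, Z.add_comm. exact H.
Qed.

Lemma tpow_coset_inv p x : in_tpow_coset D t p x -> in_tpow_coset D t (- p) (ginv x).
Proof.
  unfold in_tpow_coset. intros Hx.
  assert (Hc : D (conj G (zpow t (- p) ** x) (zpow t (- p)))) by
    (apply (proj2 (proj2 HDE)); auto; apply subX; auto).
  apply (subV _ _ HD) in Hc.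
  rewrite conjE, <- !gmulA, gmulKg, ginvM, <- zpow_opp in Hc. exact Hc.
Qed.

Lemma tpow_coset_pow p x n : in_tpow_coset D t p x -> in_tpow_coset D t (p * n) (zpow x n).
Proof.
  intros Hx. induction n using Z.peano_ind.
  - unfold in_tpow_coset. rewrite Z.mul_0_r, !zpow0, gmul1l. apply sub1, HD.
  - rewrite zpow_succ, Z.mul_succ_r. apply tpow_coset_mul; auto.
  - rewrite zpow_pred, Z.mul_pred_r. apply tpow_coset_mul, tpow_coset_inv; auto.
Qed.

Lemma tpow_coset0 x : in_tpow_coset D t 0 x -> D x.
Proof. unfold in_tpow_coset. rewrite zpow0, gmul1l. auto. Qed.

(* If [x = t^a] and [y = t^b] modulo [D], then [x^b y^-a] lies in [D]. *)
Lemma cyclic_quotient_dependent x y : E x -> E y ->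
  exists p q, (p <> 0 \/ q <> 0) /\ D (zpow x p ** zpow y q).
Proof.
  intros Hx Hy. destruct (Hcov x Hx) as [a Ha]. destruct (Hcov y Hy) as [b Hb].
  destruct (classic (a = 0 /\ b = 0)) as [[-> ->] | Hab].
  - exists 1, 0. split; [lia|]. rewrite zpow1, zpow0, gmul1r. apply tpow_coset0, Ha.
  - exists b, (- a). split; [lia|]. apply tpow_coset0.
    replace 0 with (a * b + b * - a) by lia.
    apply tpow_coset_mul; apply tpow_coset_pow; auto.
Qed.

(* [1, t, ..., t^(n-1)] would be a transversal if [t^n = 1]. *)
Lemma cyclic_quotient_inford : infinite_quotient G E D -> inford t.
Proof.
  intros Hinf r Hr Htr.
  set (n := Z.to_nat (Z.abs r)).
  assert (Htn : zpow t (Z.of_nat n) = gone) by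
    (unfold n; rewrite Z2Nat.id by lia; apply zpow_abs_eq1, Htr).
  destruct (Hinf (map (gpow G t) (seq 0 n))) as [h [Hh Hno]].
  { intros x Hx. apply in_map_iff in Hx as [i [<- _]]. rewrite gpow_zpow. apply subX; auto. }
  destruct (Hcov h Hh) as [p Hp].
  apply (Hno (gpow G t (Z.to_nat (p mod Z.of_nat n)))).
  - apply in_map, in_seq. pose proof (Z.mod_pos_bound p (Z.of_nat n)). lia.
  - rewrite gpow_zpow, Z2Nat.id, <- zpow_opp by (apply Z.mod_pos_bound; lia).
    replace (- (p mod Z.of_nat n)) with (- p + Z.of_nat n * (p / Z.of_nat n))
      by (rewrite (Z.mod_eq p (Z.of_nat n)) by lia; lia).
    rewrite zpow_add, zpow_mul, Htn, zpow1g, gmul1r. exact Hp.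
Qed.

End CyclicQuotient.

Lemma cyclic_quotient_cover {G : Group} (E D : subset G) : cyclic_quotient G E D ->
  exists t, E t /\ forall h, E h -> exists p, in_tpow_coset D t p h.
Proof.
  intros [t [Ht Hc]]. exists t. split; auto.
  intros h Hh. destruct (Hc h Hh) as [n [Hn | Hn]].
  - exists (- Z.of_nat n). unfold in_tpow_coset. rewrite Z.opp_involutive, <- gpow_zpow. exact Hn.
  - exists (Z.of_nat n). unfold in_tpow_coset. rewrite <- zpow_ginv, <- gpow_zpow. exact Hn.
Qed.

Section PolycyclicSeries.
Context {G : Group} (Hs : nat -> subset G) (m : nat).
Hypothesis Hser : forall i, (i < m)%nat ->
  is_subgroup G (Hs i) /\ normal_in G (Hs (S i)) (Hs i) /\ cyclic_quotient G (Hs i) (Hs (S i)).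

Lemma series_periodic_over i d : (i + d <= m)%nat ->
  (forall l, (i <= l < i + d)%nat -> ~ infinite_quotient G (Hs l) (Hs (S l))) ->
  periodic_over (Hs i) (Hs (i + d)).
Proof.
  induction d as [|d IH]; intros Hd Hfin.
  - rewrite Nat.add_0_r. apply periodic_over_refl.
  - apply (periodic_over_trans _ (Hs (i + d))).
    + apply IH; [lia | intros l Hl; apply Hfin; lia].
    + rewrite Nat.add_succ_r.
      destruct (Hser (i + d) ltac:(lia)) as [HsI [[HsS _] _]].
      apply finite_quotient_periodic; auto. apply Hfin. lia.
Qed.

End PolycyclicSeries.

Section HirschOne.
Context {G : Group} (F : subset G).
Hypothesis HF : hirsch_length_one G F.

Lemma hirsch_one_inford : exists t : G, inford t.
Proof.
  destruct HF as [Hs [m [_ [_ [Hser [j [Hj [Hinf _]]]]]]]].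
  destruct (Hser j Hj) as [HE [HDE Hcyc]].
  destruct (cyclic_quotient_cover _ _ Hcyc) as [t [Ht Hcov]].
  exists t. apply (cyclic_quotient_inford (Hs j) (Hs (S j))); auto.
Qed.

(* Powers of [a] and [b] meet the infinite cyclic factor [H_j / H_(j+1)], which has
   rank one, and [H_(j+1)] is periodic. *)
Lemma hirsch_one_dependent a b : F a -> F b -> commute a b -> dependent a b.
Proof.
  intros Ha Hb Hab.
  destruct HF as [Hs [m [H0 [Hm [Hser [j [Hj [Hinf Hfin]]]]]]]].
  destruct (Hser j Hj) as [HE [HDE Hcyc]].
  destruct (cyclic_quotient_cover _ _ Hcyc) as [t [Ht Hcov]].
  assert (Htop : periodic_over (Hs 0%nat) (Hs j)).
  { apply (series_periodic_over Hs m Hser 0%nat j); [lia|]. intros l Hl. apply Hfin; lia. }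
  assert (Hbot : periodic_over (Hs (S j)) (Hs m)).
  { replace (Hs m) with (Hs (S j + (m - S j))%nat) by (f_equal; lia).
    apply (series_periodic_over Hs m Hser); [lia|]. intros l Hl. apply Hfin; lia. }
  destruct (Htop a (proj2 (H0 a) Ha)) as [na [Hna HaE]].
  destruct (Htop b (proj2 (H0 b) Hb)) as [nb [Hnb HbE]].
  destruct (cyclic_quotient_dependent _ _ t HE HDE Ht Hcov _ _ HaE HbE) as [p [q [Hpq HD]]].
  destruct (Hbot _ HD) as [r [Hr Hr1]]. apply Hm in Hr1.
  rewrite <- !zpow_mul, zpow_pair in Hr1 by exact Hab.
  exists (na * p * r), (nb * q * r). split; [|exact Hr1]. destruct Hpq; [left | right]; nia.
Qed.

End HirschOne.

Lemma torsion_order {G : Group} (c : G) : torsion c -> c <> gone ->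
  exists o, 2 <= o /\ forall k, zpow c k = gone <-> (o | k).
Proof.
  intros [r [Hr Hcr]] Hc1.
  set (P := fun n => (1 <= n)%nat /\ zpow c (Z.of_nat n) = gone).
  destruct (dec_inh_nat_subset_has_unique_least_element P (fun n => classic (P n)))
    as [n [[[Hn1 Hn] Hmin] _]].
  { exists (Z.to_nat (Z.abs r)). split; [lia|]. rewrite Z2Nat.id by lia. apply zpow_abs_eq1, Hcr. }
  assert (Hdiv : forall k, zpow c k = gone <-> (Z.of_nat n | k)).
  { intros k. split.
    - intros Hk. rewrite (Z.div_mod k (Z.of_nat n)), zpow_add, zpow_mul, Hn, zpow1g, gmul1l in Hk
        by lia.
      pose proof (Z.mod_pos_bound k (Z.of_nat n)) as Hb.
      destruct (Z.eq_dec (k mod Z.of_nat n) 0) as [H0 | H0].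
      + apply Z.mod_divide; lia.
      + exfalso. assert (Hle : (n <= Z.to_nat (k mod Z.of_nat n))%nat).
        { apply Hmin. split; [lia|]. rewrite Z2Nat.id by lia. exact Hk. }
        lia.
    - intros [s ->]. rewrite Z.mul_comm, zpow_mul, Hn, zpow1g. reflexivity. }
  exists (Z.of_nat n). split; auto.
  destruct (Nat.eq_dec n 1) as [-> | ]; [|lia].
  exfalso. apply Hc1. rewrite <- (zpow1 c). apply Hdiv. exists 1. lia.
Qed.

Section Derived.
Context {G : Group}.

Lemma derived1_comm (a b : G) : derived G 1 (comm G a b).
Proof. apply gen_in. exists a, b. auto. Qed.

Lemma derived1_sub : is_subgroup G (derived G 1).
Proof. apply gen_sub. Qed.

Lemma derived1_normal (x g : G) : derived G 1 x -> derived G 1 (conj G x g).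
Proof.
  intros Hx. revert g.
  refine (gen_min _ (fun x => forall g, derived G 1 (conj G x g)) _ _ x Hx).
  - split; [|split].
    + intros g. rewrite conj1g. apply sub1, derived1_sub.
    + intros a b Ha Hb g. rewrite conjMg. apply subM; auto. apply derived1_sub.
    + intros a Ha g. rewrite conjVg. apply subV; auto. apply derived1_sub.
  - intros y [a [b [_ [_ ->]]]] g. rewrite comm_conj. apply derived1_comm.
Qed.

(* If [G'] were not abelian it would be all of [G], and then so would every [G^(n)]. *)
Lemma Yn_soluble_derived_abelian : in_Yn G -> soluble G -> ~ full_group_abelian G ->
  is_abelian G (derived G 1).
Proof.
  intros HY [n Hn] Hna. apply NNPP. intros HnA.
  assert (Hall : forall g, derived G 1 g).
  { intros g. apply (Yn_normal_nonabelian HY); auto using derived1_sub, derived1_normal. }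
  assert (Hd : forall k x, derived G k x).
  { induction k; intros x; [exact I|].
    refine (gen_min _ _ (gen_sub _) _ x (Hall x)).
    intros y [a [b [_ [_ ->]]]]. apply gen_in. exists a, b.
    split; [apply IHk | split; [apply IHk | reflexivity]]. }
  apply Hna. intros x y. rewrite (Hn x (Hd n x)), (Hn y (Hd n y)). reflexivity.
Qed.

Lemma derived1_central_of : (forall a b : G, central (comm G a b)) ->
  forall x, derived G 1 x -> central x.
Proof.
  intros HC x Hx. apply (gen_min _ _ center_sub) in Hx; auto.
  intros y [a [b [_ [_ ->]]]]. apply HC.
Qed.

End Derived.

Section Fitting.
Context {G : Group}.

Lemma fitting_of_normal_nilpotent (N : subset G) x : is_subgroup G N ->
  (forall y g, N y -> N (conj G y g)) -> is_nilpotent G N -> N x -> fitting G x.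
Proof. intros Hs Hn Hnil Hx. apply gen_in. exists N. split; [split; [|split]|split]; auto. Qed.

Lemma abelian_nilpotent (N : subset G) : is_subgroup G N -> is_abelian G N -> is_nilpotent G N.
Proof.
  intros Hs Ha. exists 1%nat. intros x Hx.
  apply (gen_min _ _ trivial_sub) in Hx; auto.
  intros y [a [b [Hya [Hb ->]]]]. apply comm_eq1, Ha; auto.
Qed.

Lemma class2_nilpotent : (forall a b : G, central (comm G a b)) -> is_nilpotent G (fun _ => True).
Proof.
  intros HC. exists 2%nat. intros x Hx.
  apply (gen_min _ _ trivial_sub) in Hx; auto.
  intros y [a [b [Ha [_ ->]]]]. apply comm_eq1, (derived1_central_of HC a Ha).
Qed.

End Fitting.

(** * Groups of class two *)

Section ClassTwo.
Context {G : Group}.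
Hypothesis HC : forall a b : G, central (comm G a b).

Lemma commMl2 (a a' b : G) : comm G (a ** a') b = comm G a b ** comm G a' b.
Proof. rewrite commMl, conj_commute; auto. apply HC. Qed.

Lemma commMr2 (a b b' : G) : comm G a (b ** b') = comm G a b ** comm G a b'.
Proof. rewrite commMr, conj_commute by apply HC. apply HC. Qed.

Lemma commVl2 (a b : G) : comm G (ginv a) b = ginv (comm G a b).
Proof. apply ginv_uniq. rewrite <- commMl2, gmulVr, comm1g. reflexivity. Qed.

Lemma commVr2 (a b : G) : comm G a (ginv b) = ginv (comm G a b).
Proof. apply ginv_uniq. rewrite <- commMr2, gmulVr, commg1. reflexivity. Qed.

Lemma commXl2 (a b : G) k : comm G (zpow a k) b = zpow (comm G a b) k.
Proof.
  induction k using Z.peano_ind.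
  - apply comm1g.
  - rewrite !zpow_succ, commMl2, IHk. reflexivity.
  - rewrite !zpow_pred, commMl2, IHk, commVl2. reflexivity.
Qed.

Lemma zpowM_class2 (u v : G) (n : nat) : exists k,
  zpow (u ** v) (Z.of_nat n) = zpow u (Z.of_nat n) ** zpow v (Z.of_nat n) ** zpow (comm G v u) k.
Proof.
  set (d := comm G v u).
  assert (Hd : forall k w, commute (zpow d k) w) by (intros; apply central_zpow, HC).
  induction n as [|n [k Hk]].
  { exists 0. rewrite !zpow0, !gmul1l. reflexivity. }
  exists (Z.of_nat n + k).
  assert (Hvn : zpow v (Z.of_nat n) ** u = u ** zpow v (Z.of_nat n) ** zpow d (Z.of_nat n)).
  { rewrite mulgC_comm, commXl2. reflexivity. }
  rewrite Nat2Z.inj_succ, !zpow_succ, Hk, zpow_add, <- !gmulA. f_equal.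
  rewrite (gmulA _ (zpow d k) u), Hd, <- (gmulA _ u), Hd, (gmulA _ (zpow v _) u), Hvn.
  rewrite <- !gmulA, (gmulA _ (zpow d (Z.of_nat n)) v), Hd, <- gmulA. reflexivity.
Qed.

End ClassTwo.

Lemma Yn_class2_nonabelian_full {G : Group} (K : subset G) (a b : G) : in_Yn G ->
  (forall u v : G, central (comm G u v)) -> is_subgroup G K -> K a -> K b -> ~ commute a b ->
  forall w, K w.
Proof.
  intros HY HC HK Ha Hb Hab w.
  apply (Yn_self_normalizing HY K a b); auto.
  assert (Hconj : forall h v, K v -> K (conj G v h)).
  { intros h v Hv. rewrite conjg_mul_comm. apply subM; auto.
    apply (Yn_central_in HY K a b); auto. }
  apply normalizerP; auto.
Qed.

Section ClassTwoNonabelian.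
Context {G : Group} (x y : G).
Hypothesis HY : in_Yn G.
Hypothesis HC : forall a b : G, central (comm G a b).
Hypothesis Hxy : ~ commute x y.
Hypothesis Hdep : forall a b : G, commute a b -> dependent a b.

Let c := comm G x y.

Lemma comm_cycle_sub_r (a : G) : is_subgroup G (fun b => exists e, comm G a b = zpow c e).
Proof.
  split; [|split].
  - exists 0. apply commg1.
  - intros b b' [e E] [e' E']. exists (e + e'). rewrite commMr2, E, E', zpow_add; auto.
  - intros b [e E]. exists (- e). rewrite commVr2, E, zpow_opp; auto.
Qed.

Lemma comm_cycle_sub_l (b : G) : is_subgroup G (fun a => exists e, comm G a b = zpow c e).
Proof.
  split; [|split].
  - exists 0. apply comm1g.
  - intros a a' [e E] [e' E']. exists (e + e'). rewrite commMl2, E, E', zpow_add; auto.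
  - intros a [e E]. exists (- e). rewrite commVl2, E, zpow_opp; auto.
Qed.

Lemma comm_in_cycle (a b : G) : exists e, comm G a b = zpow c e.
Proof.
  assert (Hgen : forall a' b', a' = x \/ a' = y -> exists e, comm G a' b' = zpow c e).
  { intros a' b' Ha'.
    apply (Yn_class2_nonabelian_full _ x y HY HC (comm_cycle_sub_r a')); auto;
      destruct Ha' as [-> | ->].
    - exists 0. apply commgg.
    - exists (-1). rewrite zpowN1. apply commVg.
    - exists 1. symmetry. apply zpow1.
    - exists 0. apply commgg. }
  apply (Yn_class2_nonabelian_full _ x y HY HC (comm_cycle_sub_l b)); auto; apply Hgen; auto.
Qed.

Lemma comm_generator_torsion : torsion c.
Proof.
  destruct (Hdep x c (commute_sym _ _ (HC x y x))) as [p [q [Hpq E]]].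
  assert (Ec : zpow c p = gone).
  { rewrite <- (comm1g y), <- E, commMl2, !commXl2 by exact HC.
    rewrite (proj2 (comm_eq1 c y) (HC x y y)), zpow1g, gmul1r. reflexivity. }
  destruct (Z.eq_dec p 0) as [-> | Hp].
  - rewrite zpow0, gmul1l in E. exists q. split; [lia | exact E].
  - exists p. auto.
Qed.

Section Order.
Variable o : Z.
Hypothesis Ho : 2 <= o.
Hypothesis Hord : forall k, zpow c k = gone <-> (o | k).

Lemma zpow_order_central (a : G) : central (zpow a o).
Proof.
  intros w. apply comm_eq1. rewrite commXl2 by exact HC.
  destruct (comm_in_cycle a w) as [e ->]. rewrite <- zpow_mul. apply Hord. exists e. lia.
Qed.

(* [(x^a y^b)^o = x^(oa) y^(ob) c^k] with [c^k] of order dividing [o]. *)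
Lemma torsion_pair_descend a b :
  torsion (zpow x (o * a) ** zpow y (o * b)) -> torsion (zpow x a ** zpow y b).
Proof.
  intros [r [Hr Hr1]].
  destruct (comm_in_cycle (zpow y b) (zpow x a)) as [e He].
  destruct (zpowM_class2 HC (zpow x a) (zpow y b) (Z.to_nat o)) as [k Hk].
  rewrite Z2Nat.id, He, <- !zpow_mul in Hk by lia.
  exists (o * (r * o)). split; [nia|].
  rewrite zpow_mul, Hk, zpowMn by (apply commute_sym, central_zpow, HC).
  rewrite (Z.mul_comm a o), (Z.mul_comm b o), zpow_mul, Hr1, zpow1g, gmul1l, <- zpow_mul.
  apply Hord. exists (e * k * r). lia.
Qed.

Lemma torsion_pair_primitive :
  exists a b, ~ ((o | a) /\ (o | b)) /\ torsion (zpow x a ** zpow y b).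
Proof.
  set (Q := fun a b => (a <> 0 \/ b <> 0) /\ torsion (zpow x a ** zpow y b)).
  assert (Hdesc : forall N a b, (Z.abs_nat a + Z.abs_nat b <= N)%nat -> Q a b ->
                    exists a' b', ~ ((o | a') /\ (o | b')) /\ torsion (zpow x a' ** zpow y b')).
  { induction N as [|N IH]; intros a b HN [Hab Htor].
    { exfalso. lia. }
    destruct (classic ((o | a) /\ (o | b))) as [[[s ->] [s' ->]] | Hnd].
    - rewrite (Z.mul_comm s o), (Z.mul_comm s' o) in *.
      apply (IH s s'); [|split; [lia | apply torsion_pair_descend; auto]].
      rewrite !Zabs2Nat.inj_mul in HN.
      destruct Hab as [Hs | Hs]; [assert (Z.abs_nat s >= 1)%nat by lia
                                 | assert (Z.abs_nat s' >= 1)%nat by lia];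
        assert (Z.abs_nat o >= 2)%nat by lia; nia.
    - exists a, b. auto. }
  destruct (Hdep (zpow x o) (zpow y o) (zpow_order_central x _)) as [p [q [Hpq E]]].
  apply (Hdesc _ (o * p) (o * q) (le_n _)). split; [lia|].
  exists 1. split; [lia|]. rewrite zpow1, !zpow_mul. exact E.
Qed.

Lemma primitive_pair_noncentral a b : ~ ((o | a) /\ (o | b)) ->
  exists g, ~ commute g (zpow x a ** zpow y b).
Proof.
  intros Hnd. destruct (classic (o | a)) as [Ha | Ha]; [exists x | exists y]; intros Hgw;
    apply commute_sym, comm_eq1 in Hgw;
    rewrite commMl2, !commXl2, commgg, zpow1g in Hgw by exact HC.
  - rewrite gmul1l, commVg, zpow_ginv in Hgw. apply Hord in Hgw.
    apply Hnd. split; auto. apply Z.divide_opp_r. exact Hgw.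
  - rewrite gmul1r in Hgw. apply Hord in Hgw. auto.
Qed.

(* A primitive torsion element [w] fails to commute with [x] or [y], while [<w, c>]
   is an abelian torsion normal subgroup, and [t^o] is central of infinite order. *)
Lemma class2_no_inford (t : G) : ~ inford t.
Proof.
  intros Ht. destruct torsion_pair_primitive as [a [b [Hnd [rw [Hrw Hw1]]]]].
  destruct (primitive_pair_noncentral a b Hnd) as [g Hg].
  set (w := zpow x a ** zpow y b) in *.
  set (M := mul_cycle (cycle w) c).
  assert (Hc : forall k, central (zpow c k)) by (intros k; apply central_zpow, HC).
  assert (HM : is_subgroup G M) by
    (apply mul_cycle_sub; [apply cycle_sub | apply normalizer_central, HC]).
  apply (Yn_center_periodic M g w HY HM) with (z := zpow t o).
  - intros m1 m2 [m [k [[i ->] ->]]] [m' [k' [[i' ->] ->]]].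
    apply commuteM; [apply commute_sym, commuteM |]; [apply zpow_comm_self | |];
      apply commute_sym, Hc.
  - intros m1 [m [k [[i ->] ->]]]. exists (rw * o). split; [nia|].
    rewrite zpow_pair by apply commute_sym, HC.
    replace (i * (rw * o)) with (rw * (i * o)) by ring.
    rewrite (zpow_mul w rw), Hw1, zpow1g, gmul1l. apply Hord. exists (k * rw). ring.
  - assert (Hconj : forall h m, M m -> M (conj G m h)).
    { intros h m1 [m [k [[i ->] ->]]]. destruct (comm_in_cycle w h) as [e He].
      rewrite conjMg, !conjXg, conjg_mul_comm, He, (conj_commute c) by apply HC.
      rewrite zpowMn by apply commute_sym, Hc.
      exists (zpow w i), (e * i + k). split; [apply cycle_zpow|].
      rewrite <- gmulA, <- zpow_mul, <- zpow_add. reflexivity. }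
    apply normalizerP; auto.
  - exists w, 0. split; [exists 1; symmetry; apply zpow1 | symmetry; apply gmul1r].
  - exact Hg.
  - apply zpow_order_central.
  - apply inford_zpow; auto. lia.
Qed.

End Order.

End ClassTwoNonabelian.

(** * Groups with non-central derived subgroup *)

Section CentralCommutators.
Context {G : Group}.

Lemma central_comm_sub_r (a : G) : is_subgroup G (fun w => central (comm G a w)).
Proof.
  split; [|split].
  - rewrite commg1. apply sub1, center_sub.
  - intros w w' Hw Hw'. rewrite commMr, conj_commute by apply Hw.
    apply subM; auto. apply center_sub.
  - intros w Hw.
    assert (E : comm G a (ginv w) ** conj G (comm G a w) (ginv w) = gone) by
      (rewrite <- commMr, gmulVr; apply commg1).
    rewrite conj_commute in E by apply Hw.
    apply ginv_uniq in E. rewrite <- (ginvK (comm G a (ginv w))), <- E.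
    apply subV; auto. apply center_sub.
Qed.

Lemma central_comm_sub_l (b : G) : is_subgroup G (fun w => central (comm G w b)).
Proof.
  split; [|split].
  - rewrite comm1g. apply sub1, center_sub.
  - intros w w' Hw Hw'. rewrite commMl, conj_commute by apply Hw.
    apply subM; auto. apply center_sub.
  - intros w Hw.
    assert (E : conj G (comm G (ginv w) b) w ** comm G w b = gone) by
      (rewrite <- commMl, gmulVl; apply comm1g).
    apply ginv_uniq_l in E.
    rewrite <- (conjgK (comm G (ginv w) b) w), E, conj_commute.
    + apply subV; auto. apply center_sub.
    + apply commuteV, commute_sym, commuteV, commute_sym, Hw.
Qed.

End CentralCommutators.

Lemma conj_iter_zpow {G : Group} (u g : G) (a b : Z) :
  zpow (conj G u g) a = zpow u b ->
  forall n : nat, zpow (conj G u (zpow g (Z.of_nat n))) (a ^ Z.of_nat n) = zpow u (b ^ Z.of_nat n).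
Proof.
  intros Hab n. induction n as [|n IH].
  { rewrite zpow0, conjg1. reflexivity. }
  rewrite Nat2Z.inj_succ, !Z.pow_succ_r by lia.
  rewrite <- Z.add_1_l, zpow_add, zpow1, <- conjgM.
  rewrite zpow_mul, <- conjXg, Hab, conjXg, <- zpow_mul, Z.mul_comm, zpow_mul, IH, <- zpow_mul.
  f_equal. lia.
Qed.

Definition derived_centralizer (G : Group) : subset G :=
  fun w => forall a, derived G 1 a -> commute w a.

Section DerivedCentralizer.
Context {G : Group}.
Local Notation C := (derived_centralizer G).

Lemma derived_centralizer_sub : is_subgroup G C.
Proof.
  split; [|split].
  - intros a _. apply commute_sym, commute1.
  - intros w w' Hw Hw' a Ha. apply commute_sym, commuteM; apply commute_sym; auto.
  - intros w Hw a Ha. apply commute_sym, commuteV, commute_sym; auto.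
Qed.

Lemma derived_centralizer_normal (w h : G) : C w -> C (conj G w h).
Proof.
  intros Hw a Ha. unfold commute.
  rewrite <- (conjgKV a h) at 1 2. rewrite <- !conjMg. f_equal.
  apply Hw, derived1_normal, Ha.
Qed.

Lemma derived_centralizer_normalizer (h : G) : normalizer G C h.
Proof. apply normalizerP; auto using derived_centralizer_normal. Qed.

End DerivedCentralizer.

Section NoncentralDerived.
Context {G : Group} (g : G).
Hypothesis HY : in_Yn G.
Hypothesis HGdA : is_abelian G (derived G 1).
Hypothesis HgC : ~ derived_centralizer G g.
Hypothesis Hdep : forall a b, fitting G a -> fitting G b -> commute a b -> dependent a b.

Local Notation C := (derived_centralizer G).
Let HC : is_subgroup G C := derived_centralizer_sub.

Lemma derived_in_centralizer a : derived G 1 a -> C a.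
Proof. intros Ha b Hb. apply HGdA; auto. Qed.

Lemma derived_centralizer_abelian : is_abelian G C.
Proof.
  apply NNPP. intros Hna. apply HgC.
  apply (Yn_normal_nonabelian HY); auto using derived_centralizer_normal.
Qed.

Lemma derived_centralizer_fitting w : C w -> fitting G w.
Proof.
  apply (fitting_of_normal_nilpotent C); auto using derived_centralizer_normal.
  apply abelian_nilpotent; auto using derived_centralizer_abelian.
Qed.

(* [C<h>] is non-abelian and normal, since it contains [G'] and [h]. *)
Lemma derived_centralizer_mul_cycle h w : ~ C h -> mul_cycle C h w.
Proof.
  intros Hh.
  apply not_all_ex_not in Hh as [a Ha]. apply imply_to_and in Ha as [Ha Hha].
  apply (Yn_self_normalizing HY _ a h).
  - apply mul_cycle_sub; auto using derived_centralizer_normalizer.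
  - exists a, 0. split; [apply derived_in_centralizer, Ha | symmetry; apply gmul1r].
  - exists gone, 1. split; [apply sub1, HC | rewrite zpow1, gmul1l; reflexivity].
  - intros Hc. apply Hha, commute_sym, Hc.
  - apply normalizerP; intros x Hx; rewrite conjg_mul_comm;
      apply mul_cycle_mulr;
      auto using derived_in_centralizer, derived1_comm, derived_centralizer_normalizer.
Qed.

Lemma derived_centralizer_span (K : subset G) : is_subgroup G K ->
  (forall c, C c -> K c) -> K g -> forall w, K w.
Proof.
  intros HK HCK Hg w. destruct (derived_centralizer_mul_cycle g w HgC) as [m [k [Hm ->]]].
  apply subM, subX; auto.
Qed.

Lemma derived_centralizer_zpow : exists s, 0 < s /\ C (zpow g s).
Proof.
  destruct (classic (C (zpow g 2))) as [H2 | H2]; [exists 2; split; auto; lia|].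
  destruct (derived_centralizer_mul_cycle _ g H2) as [m [k [Hm Hgm]]].
  assert (Hm' : m = zpow g (1 - 2 * k)).
  { apply (gmul_cancel_r (zpow (zpow g 2) k)). rewrite <- Hgm, <- zpow_mul, <- zpow_add.
    rewrite <- (zpow1 g) at 1. f_equal. lia. }
  exists (Z.abs (1 - 2 * k)). split; [lia|].
  destruct (Z.abs_spec (1 - 2 * k)) as [[_ ->] | [_ ->]]; rewrite <- ?Hm'; auto.
  rewrite zpow_opp, <- Hm'. apply subV; auto.
Qed.

Lemma derived_centralizer_inford (t : G) : inford t -> exists u, C u /\ inford u.
Proof.
  intros Ht. destruct derived_centralizer_zpow as [s [Hs HgsC]].
  destruct (derived_centralizer_mul_cycle g t HgC) as [m0 [k0 [Hm0 ->]]].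
  destruct (mul_cycle_zpow C g HC (derived_centralizer_normalizer g) m0 k0 s Hm0)
    as [m [Hm Hu]].
  exists (zpow (m0 ** zpow g k0) s). split.
  - rewrite Hu, Z.mul_comm, zpow_mul. apply subM, subX; auto.
  - apply inford_zpow; auto. lia.
Qed.

(* With [u^g] and [u] dependent, [(u^g)^a = u^b]; iterating up to a power [g^s] in [C]
   forces [|a| = |b|], so [v = u^a] is inverted or centralized by [g]. *)
Lemma derived_centralizer_invariant_inford (t : G) : inford t ->
  exists v, C v /\ inford v /\ (conj G v g = ginv v \/ conj G v g = v).
Proof.
  intros Ht. destruct (derived_centralizer_inford t Ht) as [u [HuC Hu]].
  assert (HugC : C (conj G u g)) by (apply derived_centralizer_normal, HuC).
  assert (Hd : dependent u (conj G u g)) by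
    (apply Hdep; auto using derived_centralizer_fitting; apply derived_centralizer_abelian; auto).
  destruct Hd as [p [q [Hpq E]]].
  assert (Hq : q <> 0).
  { intros ->. rewrite zpow0, gmul1r in E. destruct Hpq; [|lia]. apply (Hu p); auto. }
  assert (Hp : p <> 0).
  { intros ->. rewrite zpow0, gmul1l, <- conjXg in E. apply conj_eq1 in E. apply (Hu q); auto. }
  assert (Hab : zpow (conj G u g) q = zpow u (- p)) by
    (rewrite zpow_opp; apply ginv_uniq, E).
  destruct derived_centralizer_zpow as [s [Hs HgsC]].
  pose proof (conj_iter_zpow u g q (- p) Hab (Z.to_nat s)) as Hit.
  rewrite Z2Nat.id, conj_commute in Hit by
    (lia || apply derived_centralizer_abelian; auto).
  apply inford_zpow_inj in Hit; auto.
  assert (Habs : Z.abs q = Z.abs (- p)).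
  { apply (Z.pow_inj_l _ _ s); try lia. rewrite <- !Z.abs_pow, Hit. reflexivity. }
  exists (zpow u q). split; [apply subX; auto|]. split; [apply inford_zpow; auto|].
  rewrite conjXg, Hab, <- zpow_opp.
  destruct (Z.abs_spec q) as [[_ Eq] | [_ Eq]]; destruct (Z.abs_spec (- p)) as [[_ Ep] | [_ Ep]];
    [right | left | left | right]; f_equal; lia.
Qed.

Lemma comm_centralizer_in c : C c -> C (comm G c g).
Proof.
  intros Hc. rewrite commE, <- gmulA, <- conjE.
  apply subM; [apply HC | apply subV; [apply HC | exact Hc] | apply derived_centralizer_normal, Hc].
Qed.

Let commCg := fun x => exists c, C c /\ x = comm G c g.

Lemma comm_centralizer_sub : is_subgroup G commCg.
Proof.
  assert (HCA := derived_centralizer_abelian).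
  assert (Hcm : forall c c', C c -> C c' -> comm G (c ** c') g = comm G c g ** comm G c' g).
  { intros c c' Hc Hc'. rewrite commMl, conj_commute; auto.
    apply HCA; auto using comm_centralizer_in. }
  split; [|split].
  - exists gone. split; [apply sub1, HC | symmetry; apply comm1g].
  - intros x y [c [Hc ->]] [c' [Hc' ->]]. exists (c ** c').
    split; [apply subM|rewrite Hcm]; auto.
  - intros x [c [Hc ->]]. exists (ginv c). split; [apply subV; auto|].
    symmetry. apply ginv_uniq_l. rewrite <- Hcm, gmulVl; [apply comm1g | |]; auto.
    apply subV; auto.
Qed.

(* Each [[c, g]] is then central, and for fixed [a] both [{w | [a, w] central}] and
   [{w | [w, a] central}] are subgroups, so it suffices to test on [C] and [g]. *)
Lemma commuting_commutators_central : (forall c, C c -> commute g (comm G c g)) ->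
  forall a b : G, central (comm G a b).
Proof.
  intros Hg. assert (HCA := derived_centralizer_abelian).
  assert (Hcg : forall c, C c -> central (comm G c g)).
  { intros c Hc w. apply (derived_centralizer_span (fun w => commute (comm G c g) w)).
    - apply centralizer_sub.
    - intros c' Hc'. apply HCA; auto using comm_centralizer_in.
    - apply commute_sym, Hg, Hc. }
  assert (Hcw : forall c, C c -> forall w, central (comm G c w)).
  { intros c Hc. apply derived_centralizer_span; [apply central_comm_sub_r | |].
    - intros c' Hc'. rewrite (proj2 (comm_eq1 c c') (HCA _ _ Hc Hc')). apply sub1, center_sub.
    - apply Hcg, Hc. }
  assert (Hgw : forall w, central (comm G g w)).
  { apply derived_centralizer_span; [apply central_comm_sub_r | |].
    - intros c Hc. rewrite commVg. apply subV; [apply center_sub | apply Hcg, Hc].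
    - rewrite commgg. apply sub1, center_sub. }
  intros a b. revert a. apply derived_centralizer_span; [apply central_comm_sub_l | |]; auto.
Qed.

Lemma comm_centralizer_torsion v : C v -> inford v -> conj G v g = v ->
  forall x, commCg x -> torsion x.
Proof.
  intros HvC Hv Hvg x [c [Hc ->]]. assert (HCA := derived_centralizer_abelian).
  assert (Hd : dependent c v) by
    (apply Hdep; auto using derived_centralizer_fitting; apply HCA; auto).
  destruct Hd as [p [q [Hpq E1]]].
  assert (Hp : p <> 0).
  { intros ->. rewrite zpow0, gmul1l in E1. destruct Hpq; [lia|]. apply (Hv q); auto. }
  exists p. split; auto.
  assert (E2 : zpow (conj G c g) p ** zpow v q = gone).
  { rewrite <- Hvg at 1. rewrite <- !conjXg, <- conjMg, E1. apply conj1g. }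
  apply ginv_uniq_l in E1. apply ginv_uniq_l in E2.
  rewrite commE, <- gmulA, <- conjE, zpowMn, zpow_ginv, E2, <- E1, <- zpow_add, Z.add_opp_diag_l.
  - reflexivity.
  - apply HCA; [apply subV | apply derived_centralizer_normal]; auto.
Qed.

Lemma comm_centralizer_normalizer : normalizer G commCg g.
Proof.
  apply normalizerP; intros x [c [Hc ->]]; [exists (conj G c g) | exists (conj G c (ginv g))];
    (split; [apply derived_centralizer_normal; auto | rewrite comm_conj, (conj_commute g); auto]).
  - apply commute_refl.
  - apply commuteV, commute_refl.
Qed.

(* Either [g] inverts an element of infinite order, or it centralizes one, [v]; in the
   latter case [v] is central and [{[c, g] | c in C}] is periodic. *)
Lemma noncentral_derived_no_inford (t : G) : ~ inford t.
Proof.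
  intros Ht. assert (HCA := derived_centralizer_abelian).
  destruct (derived_centralizer_invariant_inford t Ht) as [v [HvC [Hv [Hinv | Hfix]]]].
  { exact (Yn_no_inversion g v HY Hinv Hv). }
  assert (Hvc : central v).
  { intros w. destruct (derived_centralizer_mul_cycle g w HgC) as [m [k [Hm ->]]].
    apply commuteM; [apply HCA; auto | apply commuteX, commute_conj, Hfix]. }
  destruct (classic (exists c, C c /\ ~ commute g (comm G c g))) as [[c [Hc Hgc]] | Hno].
  - apply (Yn_center_periodic commCg g (comm G c g) HY comm_centralizer_sub) with (z := v);
      auto using comm_centralizer_normalizer.
    + intros x y [c1 [Hc1 ->]] [c2 [Hc2 ->]]. apply HCA; auto using comm_centralizer_in.
    + apply (comm_centralizer_torsion v); auto.
    + exists c. auto.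
  - assert (Hcg : forall c, C c -> commute g (comm G c g)).
    { intros c Hc. apply NNPP. intros Hgc. apply Hno. exists c. auto. }
    apply HgC. intros a Ha. apply commute_sym.
    apply (derived1_central_of (commuting_commutators_central Hcg) a Ha).
Qed.

End NoncentralDerived.

Lemma Yn_class2_abelian {G : Group} (t : G) : in_Yn G ->
  (forall a b : G, central (comm G a b)) -> (forall a b : G, commute a b -> dependent a b) ->
  inford t -> full_group_abelian G.
Proof.
  intros HY HC Hdep Ht x y. apply NNPP. intros Hxy.
  assert (Hc1 : comm G x y <> gone) by (intros E; apply Hxy, comm_eq1, E).
  destruct (torsion_order _ (comm_generator_torsion x y HC Hdep) Hc1) as [o [Ho Hord]].
  exact (class2_no_inford x y HY HC Hxy Hdep o Ho Hord t Ht).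
Qed.

Theorem lemma3p1 (G : Group) :
  in_Yn G -> infinite_group G -> fin_generated G -> soluble G ->
  hirsch_length_one G (fitting G) ->
  full_group_abelian G.
Proof.
  intros HY _ _ Hsol HF. apply NNPP. intros Hna.
  destruct (hirsch_one_inford _ HF) as [t Ht].
  pose proof (hirsch_one_dependent _ HF) as Hdep.
  destruct (classic (forall g, derived_centralizer G g)) as [Hcen | Hncen].
  - assert (HC : forall a b : G, central (comm G a b)) by
      (intros a b w; apply commute_sym, Hcen, derived1_comm).
    assert (HF_all : forall w : G, fitting G w).
    { intros w. apply (fitting_of_normal_nilpotent (fun _ => True)); auto.
      - repeat split.
      - apply class2_nilpotent, HC. }
    apply Hna, (Yn_class2_abelian t HY HC); auto.
  - apply not_all_ex_not in Hncen as [g Hg].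
    exact (noncentral_derived_no_inford g HY (Yn_soluble_derived_abelian HY Hsol Hna) Hg Hdep t Ht).
Qed.
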